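(* There exist a constant $C>0$, a deterministic leader election algorithm with advice $\mathcal{A}$, and a map $G\mapsto \mathrm{Adv}(G)$ assigning a binary string to each feasible graph, such that for every feasible $n$-node graph $G$ with election index $\phi$: (1) the length of $\mathrm{Adv}(G)$ is at most $C\, n\log n$; and (2) when all nodes of $G$ receive $\mathrm{Adv}(G)$ as advice, $\mathcal{A}$ performs leader election in $G$ in time $\phi$.
   Context: A graph is a simple undirected connected finite graph with $n\ge 3$ nodes, which have no identifiers; at each node $v$ of degree $d$ the incident edges carry distinct port numbers $0,\dots,d-1$ (local to each node). The truncated view $\mathcal{V}^0(v)$ is a single node; $\mathcal{V}^{l+1}(v)$ is the port-labelled rooted tree whose root has, for every neighbour $v_i$ of $v$, a child $x_i$ joined by an edge carrying the same two port numbers as $\{v,v_i\}$ (the one at $v$ at the root side), and $x_i$ is the root of a copy of $\mathcal{V}^l(v_i)$. The augmented truncated view $\mathcal{B}^l(v)$ is $\mathcal{V}^l(v)$ with each leaf labelled by the degree in $G$ of the node it represents. A graph is feasible if for some $l$ the views $\mathcal{B}^l(v)$ of all nodes are pairwise distinct; its election index $\phi$ is the smallest such $l$ (equivalently, the minimum time of leader election when nodes know the port-labelled map of the graph). Model (LOCAL): synchronous rounds, all nodes start simultaneously, in each round every node exchanges arbitrary messages with all neighbours and computes arbitrarily. Leader election: every node $v$ outputs a sequence $(p_1,q_1,\dots,p_k,q_k)$ of nonnegative integers describing a simple path starting at $v$ whose $i$-th edge has port $p_i$ at its endpoint closer to $v$ and $q_i$ at the other endpoint; all these paths must end at a common node (the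 leader). Time is the number of rounds until all nodes output. Advice: before the start, an oracle knowing the entire port-labelled graph gives the same binary string (the advice) to all nodes; its length is the size of advice. A deterministic algorithm with advice: the actions/output of node $v$ in round $r$ are a function of the advice and of $\mathcal{B}^r(v)$. Logarithms are base 2. *)

From Stdlib Require Import Reals List Arith Bool.
Import ListNotations.

(** * Port-labelled graphs
    Nodes are the naturals 0..pg_n-1.  Node [v] has degree [deg v]; the edge
    with port [p < deg v] at [v] leads to node [nbr v p], where it carries
    port [rport v p]. *)
Record pgraph := PGraph {
  pg_n  : nat;
  deg   : nat -> nat;
  nbr   : nat -> nat -> nat;
  rport : nat -> nat -> nat
}.

Inductive reach (G : pgraph) (u : nat) : nat -> Prop :=
| reach_refl : reach G u u
| reach_step : forall w p, reach G u w -> p < deg G w -> reach G u (nbr G w p).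

Definition wf_graph (G : pgraph) : Prop :=
  3 <= pg_n G /\
  (forall v p, v < pg_n G -> p < deg G v ->
     nbr G v p < pg_n G /\
     rport G v p < deg G (nbr G v p) /\
     nbr G (nbr G v p) (rport G v p) = v /\
     rport G (nbr G v p) (rport G v p) = p /\
     nbr G v p <> v) /\
  (forall v p p', v < pg_n G -> p < deg G v -> p' < deg G v ->
     nbr G v p = nbr G v p' -> p = p') /\
  (forall u v, u < pg_n G -> v < pg_n G -> reach G u v).

(** * Augmented truncated views
    [VLeaf d]: a leaf labelled by the degree [d] of the node it represents.
    [VNode cs]: an internal node; the i-th entry of [cs] is the child reached
    by port i at this node, paired with the port [q] at the other endpoint. *)
Inductive view : Type :=
| VLeaf : nat -> view
| VNode : list (nat * view) -> view.

Fixpoint bview (G : pgraph) (l : nat) (v : nat) : view :=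
  match l with
  | O => VLeaf (deg G v)
  | S l' => VNode (map (fun p => (rport G v p, bview G l' (nbr G v p)))
                       (seq 0 (deg G v)))
  end.

Definition views_distinct (G : pgraph) (l : nat) : Prop :=
  forall u v, u < pg_n G -> v < pg_n G -> u <> v -> bview G l u <> bview G l v.

Definition feasible (G : pgraph) : Prop := exists l, views_distinct G l.

Definition election_index (G : pgraph) (phi : nat) : Prop :=
  views_distinct G phi /\ forall l, l < phi -> ~ views_distinct G l.

(** * Paths described by port sequences (p1,q1,...,pk,qk).
    [path_nodes G v s] = Some (list of visited nodes, starting with v) if s
    describes a valid path from v, None otherwise. *)
Fixpoint path_nodes (G : pgraph) (v : nat) (s : list nat) : option (list nat) :=
  match s with
  | [] => Some [v]
  | p :: q :: s' =>
      if andb (Nat.ltb p (deg G v)) (Nat.eqb (rport G v p) q) then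
        match path_nodes G (nbr G v p) s' with
        | Some l => Some (v :: l)
        | None => None
        end
      else None
  | [_] => None
  end.

Definition simple_path_to (G : pgraph) (v : nat) (s : list nat) (w : nat) : Prop :=
  exists l, path_nodes G v s = Some l /\ NoDup l /\ last l v = w.

(** The action/output of node v in round r is a function of the advice and of
    B^r(v): [A adv (bview G r v)] is [None] if v does not output in round r,
    and [Some s] if v outputs s in round r.  A node's output is the one
    produced in the first round where it outputs. *)
Definition algorithm := list bool -> view -> option (list nat).

Definition elects_in (A : algorithm) (adv : list bool) (G : pgraph) (t : nat) : Prop :=
  exists leader, leader < pg_n G /\
    forall v, v < pg_n G ->
      exists r s, r <= t /\
        (forall r', r' < r -> A adv (bview G r' v) = None) /\
        A adv (bview G r v) = Some s /\
        simple_path_to G v s leader.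

Definition log2 (x : R) : R := (ln x / ln 2)%R.

From Stdlib Require Import Reals List Lia Lra PeanoNat Wf_nat.
From Stdlib Require Import Classical ClassicalEpsilon FunctionalExtensionality.
Import ListNotations.

(* Nodes get names computed from their views, by a colour refinement steered
   by the advice.  The level-0 name of a node is its degree; level-[l+1] names
   are obtained from level-[l] names by rules, each of which splits one class of
   equal names according to one port entry (port at the neighbour, level-[l]
   name of the neighbour).  With enough rules, level-[l] names coincide exactly
   when the views B^l coincide, so at level [phi] they are unique.  Every rule
   creates a new class, hence at most [n] rules are needed over all levels, and
   each rule is six numbers below [2n].  The advice also contains a
   breadth-first spanning tree written in terms of names; at round [phi] every
   node computes its name and outputs its path to the root.  In total the
   advice consists of O(n) numbers of O(log n) bits. *)

Section WellFormedGraph.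
Variable G : pgraph.
Hypothesis W : wf_graph G.
Notation n := (pg_n G).

Lemma wf_port v p : v < n -> p < deg G v ->
  nbr G v p < n /\ rport G v p < deg G (nbr G v p) /\
  nbr G (nbr G v p) (rport G v p) = v /\ nbr G v p <> v.
Proof. destruct W as [_ [Hport _]]. intros Hv Hp. apply Hport in Hp; tauto. Qed.

Lemma nbr_lt v p : v < n -> p < deg G v -> nbr G v p < n.
Proof. apply wf_port. Qed.

Lemma reach_lt u v : reach G u v -> u < n -> v < n.
Proof. induction 1; auto using nbr_lt. Qed.

Lemma deg_pos v : v < n -> 0 < deg G v.
Proof.
  intros Hv. destruct W as [Hn3 [_ [_ Hconn]]].
  set (u := if v =? 0 then 1 else 0).
  assert (Hu : u < n /\ u <> v) by (unfold u; destruct (Nat.eqb_spec v 0); lia).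
  destruct Hu as [Hu Huv]. pose proof (Hconn u v Hu Hv) as Hr. clearbody u.
  inversion Hr as [|w p Hw Hp Ev]; [congruence|].
  destruct (wf_port w p (reach_lt u w Hw Hu) Hp) as [_ [Hq _]]. lia.
Qed.

(* [v] and its [deg G v] neighbours are pairwise distinct nodes. *)
Lemma deg_lt v : v < n -> deg G v < n.
Proof.
  intros Hv. destruct W as [_ [_ [Hinj _]]].
  assert (Hnd : NoDup (v :: map (nbr G v) (seq 0 (deg G v)))).
  { constructor.
    - intros [p [Ep Hp]]%in_map_iff. apply in_seq in Hp.
      destruct (wf_port v p Hv ltac:(lia)) as [_ [_ [_ Hne]]]. congruence.
    - apply NoDup_map_NoDup_ForallPairs; [|apply seq_NoDup].
      intros a b Ha%in_seq Hb%in_seq. apply Hinj; lia. }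
  assert (Hincl : incl (v :: map (nbr G v) (seq 0 (deg G v))) (seq 0 n)).
  { intros x [<-|[p [<- Hp%in_seq]]%in_map_iff]; apply in_seq; [lia|].
    pose proof (nbr_lt v p Hv ltac:(lia)). lia. }
  pose proof (NoDup_incl_length Hnd Hincl) as Hlen.
  simpl in Hlen. rewrite length_map, !length_seq in Hlen. lia.
Qed.

End WellFormedGraph.

Lemma nth_error_map_seq {B} (f : nat -> B) d p :
  nth_error (map f (seq 0 d)) p = if p <? d then Some (f p) else None.
Proof. rewrite nth_error_map, nth_error_seq. destruct (p <? d); reflexivity. Qed.

Lemma bview_S_eq G k u w :
  bview G (S k) u = bview G (S k) w <->
  deg G u = deg G w /\ forall p, p < deg G u ->
     rport G u p = rport G w p /\ bview G k (nbr G u p) = bview G k (nbr G w p).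
Proof.
  simpl. split.
  - intros [= Hcs].
    assert (Hd : deg G u = deg G w).
    { apply (f_equal (@length _)) in Hcs. now rewrite !length_map, !length_seq in Hcs. }
    split; [exact Hd|]. intros p Hp.
    apply (f_equal (fun cs => nth_error cs p)) in Hcs.
    rewrite !nth_error_map_seq in Hcs.
    replace (p <? deg G u) with true in Hcs by (symmetry; apply Nat.ltb_lt; lia).
    replace (p <? deg G w) with true in Hcs by (symmetry; apply Nat.ltb_lt; lia).
    now injection Hcs as -> ->.
  - intros [Hd Hp]. f_equal. rewrite <- Hd. apply map_ext_in.
    intros p Hin%in_seq. destruct (Hp p ltac:(lia)) as [-> ->]. reflexivity.
Qed.

Lemma bview_eq_pred G k u w :
  bview G (S k) u = bview G (S k) w -> bview G k u = bview G k w.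
Proof.
  revert u w. induction k as [|k IH]; intros u w [Hd Hp]%bview_S_eq.
  - simpl. now rewrite Hd.
  - apply bview_S_eq. split; [exact Hd|].
    intros p Hq. destruct (Hp p Hq). auto.
Qed.

Definition vdeg (V : view) : nat :=
  match V with VLeaf d => d | VNode cs => length cs end.

Lemma vdeg_bview G k u : vdeg (bview G k u) = deg G u.
Proof. destruct k; simpl; [reflexivity|]. now rewrite length_map, length_seq. Qed.

Lemma bview_eq_deg G k u w : bview G k u = bview G k w -> deg G u = deg G w.
Proof. intros H. now rewrite <- (vdeg_bview G k u), <- (vdeg_bview G k w), H. Qed.

Fixpoint height (V : view) : nat :=
  match V with
  | VLeaf _ => 0
  | VNode ((_, W) :: _) => S (height W)
  | VNode [] => 1
  end.

Lemma height_bview G : wf_graph G -> forall r v, v < pg_n G -> height (bview G r v) = r.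
Proof.
  intros W r. induction r as [|r IH]; intros v Hv; [reflexivity|].
  simpl. pose proof (deg_pos G W v Hv).
  destruct (deg G v) eqn:Ed; [lia|]. simpl.
  rewrite IH; auto. apply nbr_lt; auto. lia.
Qed.

Section Stabilization.
Variable G : pgraph.
Hypothesis W : wf_graph G.
Notation n := (pg_n G).

Definition same_partition (k l : nat) : Prop :=
  forall u w, u < n -> w < n -> (bview G k u = bview G k w <-> bview G l u = bview G l w).

Lemma same_partition_S L :
  same_partition (S L) L -> forall j, same_partition (S (L + j)) (L + j).
Proof.
  intros H j. induction j as [|j IH]; intros u w Hu Hw.
  - rewrite Nat.add_0_r. auto.
  - rewrite Nat.add_succ_r, !bview_S_eq.
    split; intros [Hd Hp]; split; auto; intros p Hq; destruct (Hp p Hq) as [Hr Hb];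
      split; auto; apply IH; auto using nbr_lt; apply nbr_lt; auto; lia.
Qed.

Lemma same_partition_stable L :
  same_partition (S L) L -> forall j, same_partition (L + j) L.
Proof.
  intros H j. induction j as [|j IH]; intros u w Hu Hw.
  - rewrite Nat.add_0_r. tauto.
  - rewrite Nat.add_succ_r, (same_partition_S L H j u w Hu Hw). auto.
Qed.

Lemma bview_splits_before_index phi L : election_index G phi -> L < phi ->
  exists u w, u < n /\ w < n /\ bview G L u = bview G L w /\ bview G (S L) u <> bview G (S L) w.
Proof.
  intros [Hdist Hmin] HL. apply NNPP. intros Hno. apply (Hmin L HL).
  assert (Hsame : same_partition (S L) L).
  { intros u w Hu Hw. split; [apply bview_eq_pred|].
    intros Heq. apply NNPP. eauto 8. }
  intros u w Hu Hw Huw Heq. apply (Hdist u w Hu Hw Huw).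
  replace phi with (L + (phi - L)) by lia. now apply same_partition_stable.
Qed.

End Stabilization.

(* A rule of level [l] renames [r_from] to [r_to] at a node whose port
   [r_port] leads, through the neighbour's port [r_back], to a neighbour with
   level-[l] name [r_nbr]. *)
Record rule := Rule { r_level : nat; r_from : nat; r_port : nat;
                      r_back : nat; r_nbr : nat; r_to : nat }.

Definition rule_fields (r : rule) : list nat :=
  [r_level r; r_from r; r_port r; r_back r; r_nbr r; r_to r].

Definition rule_lt (b : nat) (r : rule) : Prop := Forall (fun k => k < b) (rule_fields r).

Lemma rule_lt_mono b b' r : b <= b' -> rule_lt b r -> rule_lt b' r.
Proof. intros Hb. apply Forall_impl. lia. Qed.

Definition entry := option (nat * nat).

Definition entry_eq_dec (a b : entry) : {a = b} + {a <> b}.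
Proof. repeat decide equality. Defined.

Definition fire (ent : nat -> entry) (c : nat) (r : rule) : nat :=
  if Nat.eq_dec c (r_from r) then
    if entry_eq_dec (ent (r_port r)) (Some (r_back r, r_nbr r)) then r_to r else c
  else c.

Lemma fire_cases ent c r :
  (c = r_from r /\ ent (r_port r) = Some (r_back r, r_nbr r) /\ fire ent c r = r_to r) \/
  (~ (c = r_from r /\ ent (r_port r) = Some (r_back r, r_nbr r)) /\ fire ent c r = c).
Proof.
  unfold fire. destruct (Nat.eq_dec c (r_from r));
    [destruct (entry_eq_dec (ent (r_port r)) (Some (r_back r, r_nbr r)))|]; tauto.
Qed.

Definition apply_rules (rs : list rule) (c : nat) (ent : nat -> entry) : nat :=
  fold_left (fire ent) rs c.

Definition rules_at (l : nat) (rs : list rule) : list rule :=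
  filter (fun r => r_level r =? l) rs.

Fixpoint vname (rs : list rule) (l : nat) (V : view) : nat :=
  match l with
  | O => vdeg V
  | S l' =>
      match V with
      | VLeaf _ => 0
      | VNode cs => apply_rules (rules_at l' rs) (vname rs l' V)
          (fun p => option_map (fun qW => (fst qW, vname rs l' (snd qW))) (nth_error cs p))
      end
  end.

Fixpoint gname (G : pgraph) (rs : list rule) (l u : nat) : nat :=
  match l with
  | O => deg G u
  | S l' => apply_rules (rules_at l' rs) (gname G rs l' u)
      (fun p => if p <? deg G u then Some (rport G u p, gname G rs l' (nbr G u p)) else None)
  end.

Definition gentry (G : pgraph) (rs : list rule) (l u p : nat) : entry :=
  if p <? deg G u then Some (rport G u p, gname G rs l (nbr G u p)) else None.

Lemma gname_S G rs l u :
  gname G rs (S l) u = apply_rules (rules_at l rs) (gname G rs l u) (gentry G rs l u).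
Proof. reflexivity. Qed.

Lemma gentry_some G rs l u p : p < deg G u ->
  gentry G rs l u p = Some (rport G u p, gname G rs l (nbr G u p)).
Proof.
  intros Hp. unfold gentry.
  now replace (p <? deg G u) with true by (symmetry; apply Nat.ltb_lt, Hp).
Qed.

Lemma gentry_none G rs l u p : deg G u <= p -> gentry G rs l u p = None.
Proof.
  intros Hp. unfold gentry.
  now replace (p <? deg G u) with false by (symmetry; apply Nat.ltb_ge, Hp).
Qed.

Lemma vname_bview G rs l : forall k u, l <= k -> vname rs l (bview G k u) = gname G rs l u.
Proof.
  induction l as [|l IH]; intros k u Hk; [apply vdeg_bview|].
  destruct k as [|k]; [lia|].
  change (vname rs (S l) (bview G (S k) u)) with
    (apply_rules (rules_at l rs) (vname rs l (bview G (S k) u))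
       (fun p => option_map (fun qW => (fst qW, vname rs l (snd qW)))
          (nth_error (map (fun p => (rport G u p, bview G k (nbr G u p))) (seq 0 (deg G u))) p))).
  rewrite IH by lia. simpl. f_equal. apply functional_extensionality. intros p.
  rewrite nth_error_map_seq. destruct (p <? deg G u); simpl; [|reflexivity].
  rewrite IH by lia. reflexivity.
Qed.

Lemma gname_app G rs extra L : Forall (fun r => L <= r_level r) extra ->
  forall l u, l <= L -> gname G (rs ++ extra) l u = gname G rs l u.
Proof.
  intros Hlev l. induction l as [|l IH]; intros u Hl; [reflexivity|].
  assert (Hat : rules_at l (rs ++ extra) = rules_at l rs).
  { unfold rules_at. rewrite filter_app, <- app_nil_r. f_equal.
    rewrite <- (filter_false extra). apply filter_ext_in. intros r Hr.
    rewrite Forall_forall in Hlev. specialize (Hlev r Hr). apply Nat.eqb_neq. lia. }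
  simpl. rewrite Hat, IH by lia. f_equal. apply functional_extensionality. intros p.
  destruct (p <? deg G u); [|reflexivity]. rewrite IH by lia. reflexivity.
Qed.

Definition nvalues (n : nat) (f : nat -> nat) : nat :=
  length (nodup Nat.eq_dec (map f (seq 0 n))).

Lemma nvalues_le n f : nvalues n f <= n.
Proof.
  unfold nvalues. transitivity (length (map f (seq 0 n))); [|now rewrite length_map, length_seq].
  apply NoDup_incl_length; [apply NoDup_nodup|]. intros x. apply nodup_In.
Qed.

Lemma nvalues_ext n f g : (forall v, v < n -> f v = g v) -> nvalues n f = nvalues n g.
Proof.
  intros Hfg. unfold nvalues. do 2 f_equal. apply map_ext_in.
  intros v Hv%in_seq. apply Hfg. lia.
Qed.

Lemma nvalues_lt n f g c :
  (forall v, v < n -> exists w, w < n /\ f v = g w) ->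
  (exists w, w < n /\ g w = c) -> (forall v, v < n -> f v <> c) ->
  nvalues n f < nvalues n g.
Proof.
  intros Hfg [w [Hw Hc]] Hfresh. unfold nvalues.
  change (length (c :: nodup Nat.eq_dec (map f (seq 0 n)))
          <= length (nodup Nat.eq_dec (map g (seq 0 n)))).
  apply NoDup_incl_length.
  - constructor; [|apply NoDup_nodup].
    intros [v [Hv Hin%in_seq]]%nodup_In%in_map_iff. apply (Hfresh v); auto; lia.
  - intros x [<-|[v [<- Hv%in_seq]]%nodup_In%in_map_iff]; apply nodup_In, in_map_iff.
    + exists w. split; [exact Hc|]. apply in_seq. lia.
    + destruct (Hfg v ltac:(lia)) as [v' [Hv' ->]]. exists v'. split; auto. apply in_seq. lia.
Qed.

Section Refinement.
Variables (n B lev : nat) (N : nat -> nat) (E : nat -> nat -> entry).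
Hypothesis lev_lt : lev < B.
Hypothesis N_lt : forall v, v < n -> N v < B.
Hypothesis E_lt : forall v p q x, v < n -> E v p = Some (q, x) -> p < B /\ q < B /\ x < B.

Definition refined (rs : list rule) (v : nat) : nat := apply_rules rs (N v) (E v).

(* Each rule creates a fresh name, [B + i] for the [i]-th rule, that splits
   an existing class; hence there are at most [n] rules. *)
Record refining (rs : list rule) : Prop := {
  refining_sound : forall u w, u < n -> w < n -> refined rs u = refined rs w -> N u = N w;
  refining_compat : forall u w, u < n -> w < n -> N u = N w ->
    (forall p, E u p = E w p) -> refined rs u = refined rs w;
  refining_count : length rs + nvalues n N <= nvalues n (refined rs);
  refining_lt : forall v, v < n -> refined rs v < B + length rs;
  refining_rules : Forall (fun r => r_level r = lev /\ rule_lt (B + length rs) r) rs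
}.

Lemma refining_nil : refining [].
Proof.
  split; simpl; auto. intros v Hv. rewrite Nat.add_0_r. apply N_lt, Hv.
Qed.

Lemma refined_snoc rs r v : refined (rs ++ [r]) v = fire (E v) (refined rs v) r.
Proof. unfold refined, apply_rules. now rewrite fold_left_app. Qed.

Section Split.
Variables (rs : list rule) (u w p q x : nat).
Hypothesis Hrs : refining rs.
Hypotheses (Hu : u < n) (Hw : w < n).
Hypothesis Huw : refined rs u = refined rs w.
Hypothesis Ew : E w p = Some (q, x).
Hypothesis Eu : E u p <> Some (q, x).

Let r := Rule lev (refined rs w) p q x (B + length rs).

Lemma split_values : nvalues n (refined rs) < nvalues n (refined (rs ++ [r])).
Proof.
  apply nvalues_lt with (c := B + length rs).
  - intros v Hv.
    destruct (fire_cases (E v) (refined rs v) r) as [[Hc _]|[_ Hfire]]; simpl in *.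
    + exists u. split; auto. rewrite refined_snoc, Hc, <- Huw.
      destruct (fire_cases (E u) (refined rs u) r) as [[_ [? _]]|[_ ->]]; simpl in *; tauto.
    + exists v. split; auto. now rewrite refined_snoc, Hfire.
  - exists w. split; auto. rewrite refined_snoc.
    destruct (fire_cases (E w) (refined rs w) r) as [[_ [_ ->]]|[Hno _]]; simpl in *; tauto.
  - intros v Hv. pose proof (refining_lt _ Hrs v Hv). lia.
Qed.

Lemma refining_split : refining (rs ++ [r]).
Proof.
  destruct Hrs as [Hsound Hcompat Hcount Hlt Hrules].
  pose proof split_values as Hsplit.
  assert (Hcases : forall v, v < n ->
    (refined rs v = refined rs w /\ refined (rs ++ [r]) v = B + length rs) \/
    refined (rs ++ [r]) v = refined rs v).
  { intros v Hv. rewrite refined_snoc.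
    destruct (fire_cases (E v) (refined rs v) r) as [[? [_ ->]]|[_ ->]]; auto. }
  assert (Hlen : length (rs ++ [r]) = S (length rs)) by (rewrite length_app; simpl; lia).
  split; rewrite ?Hlen.
  - intros a b Ha Hb Hab. apply Hsound; auto.
    pose proof (Hlt a Ha). pose proof (Hlt b Hb).
    destruct (Hcases a Ha) as [[Ha' Ea]|Ea], (Hcases b Hb) as [[Hb' Eb]|Eb]; congruence || lia.
  - intros a b Ha Hb HN HE. rewrite !refined_snoc, (Hcompat a b Ha Hb HN HE).
    now rewrite (functional_extensionality _ _ HE).
  - lia.
  - intros v Hv. pose proof (Hlt v Hv). destruct (Hcases v Hv) as [[_ ->]| ->]; lia.
  - apply Forall_app. split.
    + refine (Forall_impl _ _ Hrules). intros r' [Hl Hr']. split; auto.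
      revert Hr'. apply rule_lt_mono. lia.
    + constructor; auto. split; [reflexivity|].
      destruct (E_lt w p q x Hw Ew) as [Hp [Hq Hx]]. pose proof (Hlt w Hw).
      repeat constructor; simpl; lia.
Qed.

End Split.

Lemma refining_complete : forall rs, refining rs ->
  exists rs', refining rs' /\ forall u w, u < n -> w < n ->
    (refined rs' u = refined rs' w <-> N u = N w /\ forall p, E u p = E w p).
Proof.
  intros rs. remember (n - nvalues n (refined rs)) as k eqn:Hk. revert rs Hk.
  induction k as [k IH] using lt_wf_ind. intros rs Hk Hrs.
  destruct (classic (exists u w p, u < n /\ w < n /\
                       refined rs u = refined rs w /\ E u p <> E w p))
    as [[u [w [p [Hu [Hw [Huw Hne]]]]]]|Hno].
  - assert (Hsplit : exists rs', refining rs' /\ nvalues n (refined rs) < nvalues n (refined rs')).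
    { destruct (E w p) as [[q x]|] eqn:Ew.
      - exists (rs ++ [Rule lev (refined rs w) p q x (B + length rs)]).
        split; [apply (refining_split rs u w)|apply (split_values rs u w)]; auto.
      - destruct (E u p) as [[q x]|] eqn:Eu; [|congruence].
        exists (rs ++ [Rule lev (refined rs u) p q x (B + length rs)]).
        split; [apply (refining_split rs w u)|apply (split_values rs w u)]; auto; congruence. }
    destruct Hsplit as [rs' [Hrs' Hlt]].
    pose proof (nvalues_le n (refined rs')).
    apply (IH (n - nvalues n (refined rs'))) with rs'; auto. lia.
  - exists rs. split; auto. intros u w Hu Hw. split.
    + intros Huw. split; [apply (refining_sound _ Hrs); auto|].
      intros p. apply NNPP. intros Hne. apply Hno. exists u, w, p. auto.
    + intros [HN HE]. apply (refining_compat _ Hrs); auto.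
Qed.

Lemma refinement_exists : exists rs, refining rs /\ forall u w, u < n -> w < n ->
    (refined rs u = refined rs w <-> N u = N w /\ forall p, E u p = E w p).
Proof. exact (refining_complete [] refining_nil). Qed.

End Refinement.

Section Levels.
Variable G : pgraph.
Hypothesis W : wf_graph G.
Notation n := (pg_n G).

Definition names_views (rs : list rule) (L : nat) : Prop :=
  forall u w, u < n -> w < n -> (gname G rs L u = gname G rs L w <-> bview G L u = bview G L w).

Lemma bview_S_eq_gentry rs L u w : names_views rs L -> u < n -> w < n ->
  (bview G (S L) u = bview G (S L) w <->
   gname G rs L u = gname G rs L w /\ forall p, gentry G rs L u p = gentry G rs L w p).
Proof.
  intros Hnv Hu Hw. rewrite (Hnv u w Hu Hw). split.
  - intros Heq. split; [now apply bview_eq_pred|].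
    apply bview_S_eq in Heq as [Hd Hp]. intros p.
    destruct (Nat.lt_ge_cases p (deg G u)) as [Hpu|Hpu].
    + destruct (Hp p Hpu) as [Hr Hb].
      pose proof (nbr_lt G W u p Hu Hpu) as Hnu. pose proof (nbr_lt G W w p Hw ltac:(lia)) as Hnw.
      now rewrite !gentry_some, Hr, (proj2 (Hnv _ _ Hnu Hnw) Hb) by lia.
    + now rewrite !gentry_none by lia.
  - intros [HL HE]. apply bview_S_eq. pose proof (bview_eq_deg _ _ _ _ HL) as Hd.
    split; [exact Hd|]. intros p Hp.
    pose proof (HE p) as Hp'. rewrite !gentry_some in Hp' by lia. injection Hp' as Hr Hb.
    split; [exact Hr|]. apply Hnv; auto using nbr_lt. apply nbr_lt; auto. lia.
Qed.

Record level_names (rs : list rule) (L : nat) : Prop := {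
  level_names_rules : Forall (fun r => r_level r < L /\ rule_lt (n + length rs) r) rs;
  level_names_index : L <= length rs;
  level_names_count : length rs <= nvalues n (gname G rs L);
  level_names_lt : forall v, v < n -> gname G rs L v < n + length rs;
  level_names_views : names_views rs L
}.

Lemma level_names_0 : level_names [] 0.
Proof.
  split; simpl.
  - constructor.
  - reflexivity.
  - apply Nat.le_0_l.
  - intros v Hv. rewrite Nat.add_0_r. now apply deg_lt.
  - intros u w _ _. simpl. split; [intros ->|intros [= ->]]; reflexivity.
Qed.

Lemma gentry_lt rs L v p q x : level_names rs L -> v < n ->
  gentry G rs L v p = Some (q, x) -> p < n + length rs /\ q < n + length rs /\ x < n + length rs.
Proof.
  intros HL Hv Hent. destruct (Nat.lt_ge_cases p (deg G v)) as [Hp|Hp].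
  - rewrite gentry_some in Hent by exact Hp. injection Hent as <- <-.
    destruct (wf_port G W v p Hv Hp) as [Hn [Hq _]].
    pose proof (deg_lt G W v Hv). pose proof (deg_lt G W _ Hn).
    pose proof (level_names_lt _ _ HL _ Hn). lia.
  - now rewrite gentry_none in Hent.
Qed.

Lemma gname_snoc_level rs extra L v :
  Forall (fun r => r_level r < L) rs -> Forall (fun r => r_level r = L) extra ->
  gname G (rs ++ extra) (S L) v = refined (gname G rs L) (gentry G rs L) extra v.
Proof.
  intros Hrs Hextra.
  assert (Hold : forall u, gname G (rs ++ extra) L u = gname G rs L u).
  { intros u. apply gname_app with L; auto.
    refine (Forall_impl _ _ Hextra). lia. }
  assert (Hat : rules_at L (rs ++ extra) = extra).
  { unfold rules_at.
    assert (Hnone : filter (fun r => r_level r =? L) rs = []).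
    { rewrite <- (filter_false rs). apply filter_ext_in.
      intros r Hr%(proj1 (Forall_forall _ _) Hrs). apply Nat.eqb_neq. lia. }
    rewrite filter_app, Hnone, forallb_filter_id; [reflexivity|].
    apply forallb_forall. intros r Hr%(proj1 (Forall_forall _ _) Hextra).
    now apply Nat.eqb_eq. }
  rewrite gname_S, Hat, Hold. unfold refined. f_equal.
  apply functional_extensionality. intros p. unfold gentry. now rewrite Hold.
Qed.

Variable phi : nat.
Hypothesis Hphi : election_index G phi.

Lemma level_names_S rs L : L < phi -> level_names rs L -> exists rs', level_names rs' (S L).
Proof.
  intros HL HrsL. pose proof HrsL as [Hlev Hidx Hcount Hlt Hviews].
  assert (Hn : 0 < n) by (destruct W; lia).
  destruct (refinement_exists n (n + length rs) L (gname G rs L) (gentry G rs L))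
    as [extra [Hext Hiff]];
    [lia | exact Hlt | intros v p q x Hv; now apply gentry_lt |].
  destruct Hext as [_ _ Hcount' Hlt' Hrules].
  assert (Hnew : forall v,
    gname G (rs ++ extra) (S L) v = refined (gname G rs L) (gentry G rs L) extra v).
  { intros v. apply gname_snoc_level.
    - refine (Forall_impl _ _ Hlev). tauto.
    - refine (Forall_impl _ _ Hrules). tauto. }
  assert (Hne : extra <> []).
  { intros ->. destruct (bview_splits_before_index G W phi L Hphi HL)
      as [u [w [Hu [Hw [HeqL HneS]]]]].
    apply HneS, (bview_S_eq_gentry rs L u w Hviews Hu Hw), (Hiff u w Hu Hw).
    apply Hviews; auto. }
  exists (rs ++ extra). split; rewrite ?length_app.
  - apply Forall_app. split.
    + refine (Forall_impl _ _ Hlev). intros r [Hr Hb]. split; [lia|].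
      revert Hb. apply rule_lt_mono. lia.
    + refine (Forall_impl _ _ Hrules). intros r [Hr Hb]. split; [lia|].
      now rewrite Nat.add_assoc.
  - destruct extra; [congruence|]. simpl. lia.
  - rewrite (nvalues_ext n _ _ (fun v _ => Hnew v)). lia.
  - intros v Hv. rewrite Hnew. pose proof (Hlt' v Hv). lia.
  - intros u w Hu Hw. rewrite !Hnew, (Hiff u w Hu Hw).
    symmetry. apply bview_S_eq_gentry; auto.
Qed.

Lemma level_names_exist : forall L, L <= phi -> exists rs, level_names rs L.
Proof.
  induction L as [|L IH]; intros HL.
  - exists []. apply level_names_0.
  - destruct (IH ltac:(lia)) as [rs Hrs]. apply (level_names_S rs); auto.
Qed.

End Levels.

Record hop := Hop { h_name : nat; h_port : nat; h_back : nat; h_next : nat }.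

Definition hop_fields (h : hop) : list nat := [h_name h; h_port h; h_back h; h_next h].

Definition lookup (T : list hop) (c : nat) : option hop := find (fun h => h_name h =? c) T.

Fixpoint route (T : list hop) (fuel c : nat) : list nat :=
  match fuel with
  | O => []
  | S f =>
      match lookup T c with
      | Some h => h_port h :: h_back h :: route T f (h_next h)
      | None => []
      end
  end.

Section Routing.
Variable G : pgraph.
Hypothesis W : wf_graph G.
Notation n := (pg_n G).
Variable nm : nat -> nat.
Hypothesis nm_inj : forall u w, u < n -> w < n -> nm u = nm w -> u = w.
Variables rank par pp : nat -> nat.
Hypothesis parent_spec : forall v, v < n -> v <> 0 ->
  pp v < deg G v /\ nbr G v (pp v) = par v /\ rank (par v) < rank v.

Definition hop_of (v : nat) : hop := Hop (nm v) (pp v) (rport G v (pp v)) (nm (par v)).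

Definition table : list hop := map hop_of (seq 1 (n - 1)).

Lemma table_length : length table = n - 1.
Proof. unfold table. now rewrite length_map, length_seq. Qed.

Lemma table_fields_lt M : n <= M -> (forall v, v < n -> nm v < M) ->
  Forall (fun k => k < M) (flat_map hop_fields table).
Proof.
  intros HM Hnm. apply Forall_flat_map, Forall_forall.
  intros h [v [<- Hv%in_seq]]%in_map_iff.
  destruct (parent_spec v ltac:(lia) ltac:(lia)) as [Hp [Hnb _]].
  destruct (wf_port G W v (pp v) ltac:(lia) Hp) as [Hw [Hq _]].
  pose proof (deg_lt G W v ltac:(lia)). pose proof (deg_lt G W _ Hw).
  rewrite Hnb in Hw. repeat constructor; simpl; try lia; apply Hnm; lia.
Qed.

Lemma lookup_table v : v < n -> lookup table (nm v) = if v =? 0 then None else Some (hop_of v).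
Proof.
  intros Hv. unfold lookup.
  destruct (find _ table) as [h|] eqn:Hfind.
  - apply find_some in Hfind as [[u [<- Hu%in_seq]]%in_map_iff Hh%Nat.eqb_eq].
    apply nm_inj in Hh; [|lia|exact Hv]. subst u.
    now replace (v =? 0) with false by (symmetry; apply Nat.eqb_neq; lia).
  - destruct (Nat.eqb_spec v 0) as [|Hv0]; [reflexivity|]. exfalso.
    assert (Hin : In (hop_of v) table) by (apply in_map, in_seq; lia).
    pose proof (find_none _ _ Hfind _ Hin) as Hkey. simpl in Hkey.
    now rewrite Nat.eqb_refl in Hkey.
Qed.

Lemma route_path : forall v, v < n -> exists rest,
  (forall fuel, length rest <= fuel ->
     path_nodes G v (route table fuel (nm v)) = Some (v :: rest)) /\
  NoDup (v :: rest) /\ (forall d, last (v :: rest) d = 0) /\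
  Forall (fun x => x < n /\ rank x <= rank v) (v :: rest).
Proof.
  intros v. remember (rank v) as k eqn:Hk. revert v Hk.
  induction k as [k IH] using lt_wf_ind. intros v Hk Hv.
  destruct (Nat.eq_dec v 0) as [->|Hv0].
  - exists []. split; [|split; [|split]].
    + intros [|f] _; [reflexivity|]. simpl. now rewrite lookup_table.
    + repeat constructor. intros [].
    + reflexivity.
    + repeat constructor; lia.
  - destruct (parent_spec v Hv Hv0) as [Hp [Hnb Hrk]].
    assert (Hw : par v < n) by (rewrite <- Hnb; now apply nbr_lt).
    destruct (IH (rank (par v)) ltac:(lia) (par v) eq_refl Hw)
      as [rest [Hroute [Hnd [Hlast Hall]]]].
    exists (par v :: rest). split; [|split; [|split]].
    + intros [|f] Hf; [simpl in Hf; lia|]. simpl.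
      rewrite lookup_table by exact Hv.
      replace (v =? 0) with false by (symmetry; now apply Nat.eqb_neq).
      simpl. replace (pp v <? deg G v) with true by (symmetry; now apply Nat.ltb_lt).
      rewrite Nat.eqb_refl, Hnb, Hroute by (simpl in Hf; lia). reflexivity.
    + constructor; [|exact Hnd]. intros Hin.
      rewrite Forall_forall in Hall. destruct (Hall v Hin). lia.
    + exact Hlast.
    + constructor; [split; lia|]. refine (Forall_impl _ _ Hall). intros x [? ?]. split; lia.
Qed.

Lemma route_simple_path v : v < n -> simple_path_to G v (route table n (nm v)) 0.
Proof.
  intros Hv. destruct (route_path v Hv) as [rest [Hroute [Hnd [Hlast Hall]]]].
  exists (v :: rest). split; [apply Hroute|split; [exact Hnd|apply Hlast]].
  assert (Hincl : incl (v :: rest) (seq 0 n)).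
  { intros x Hx. rewrite Forall_forall in Hall. apply in_seq. destruct (Hall x Hx). lia. }
  pose proof (NoDup_incl_length Hnd Hincl) as Hlen. rewrite length_seq in Hlen. simpl in Hlen. lia.
Qed.

End Routing.

Inductive walk (G : pgraph) (u : nat) : nat -> nat -> Prop :=
| walk_nil : walk G u 0 u
| walk_cons : forall k w p, walk G u k w -> p < deg G w -> walk G u (S k) (nbr G w p).

Lemma reach_walk G u v : reach G u v -> exists k, walk G u k v.
Proof.
  induction 1 as [|w p _ [k Hk] Hp]; [exists 0; constructor|exists (S k); now constructor].
Qed.

Lemma walk_lt G u k v : wf_graph G -> walk G u k v -> u < pg_n G -> v < pg_n G.
Proof. intros W. induction 1; auto using nbr_lt. Qed.

(* [rank] is the distance from node 0 and [par v] a neighbour one step closer. *)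
Lemma spanning_tree_exists G : wf_graph G -> exists rank par pp : nat -> nat,
  forall v, v < pg_n G -> v <> 0 ->
    pp v < deg G v /\ nbr G v (pp v) = par v /\ rank (par v) < rank v.
Proof.
  intros W. assert (Hn : 0 < pg_n G) by (destruct W; lia).
  destruct (choice (fun v d => v < pg_n G ->
                      walk G 0 d v /\ forall j, walk G 0 j v -> d <= j)) as [dist Hdist].
  { intros v. destruct (classic (v < pg_n G)) as [Hv|Hv]; [|exists 0; tauto].
    destruct W as [_ [_ [_ Hconn]]].
    destruct (reach_walk G 0 v (Hconn 0 v Hn Hv)) as [k Hk].
    destruct (dec_inh_nat_subset_has_unique_least_element (fun k => walk G 0 k v)
                (fun k => classic _) (ex_intro _ k Hk)) as [d [[Hd Hmin] _]].
    exists d. auto. }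
  destruct (choice (fun v (wp : nat * nat) => v < pg_n G -> v <> 0 ->
      snd wp < deg G v /\ nbr G v (snd wp) = fst wp /\ dist (fst wp) < dist v)) as [f Hf].
  { intros v. destruct (classic (v < pg_n G /\ v <> 0)) as [[Hv Hv0]|Hno]; [|exists (0, 0); tauto].
    destruct (Hdist v Hv) as [Hwalk _]. remember (dist v) as d eqn:Hd.
    destruct Hwalk as [|k w p Hwk Hp]; [congruence|].
    pose proof (walk_lt G 0 k w W Hwk Hn) as Hw.
    destruct (wf_port G W w p Hw Hp) as [_ [Hq [Hback _]]].
    exists (w, rport G w p). intros _ _. simpl. repeat split; auto.
    pose proof (proj2 (Hdist w Hw) k Hwk). lia. }
  exists dist, (fun v => fst (f v)), (fun v => snd (f v)). auto.
Qed.

(* Binary digits after the leading one, each preceded by a continuation bit: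
   about [2 log2 k] bits for [k], and self-delimiting. *)
Fixpoint pos_code (p : positive) : list bool :=
  match p with
  | xI p' => true :: true :: pos_code p'
  | xO p' => true :: false :: pos_code p'
  | xH => [false]
  end.

Fixpoint pos_decode (bs : list bool) : positive * list bool :=
  match bs with
  | true :: b :: rest => let (p, r) := pos_decode rest in (if b then xI p else xO p, r)
  | _ :: rest => (xH, rest)
  | [] => (xH, [])
  end.

Lemma pos_decode_code p r : pos_decode (pos_code p ++ r) = (p, r).
Proof. induction p; simpl; try rewrite IHp; reflexivity. Qed.

Lemma pos_code_length p : length (pos_code p) = 2 * Nat.log2 (Pos.to_nat p) + 1.
Proof.
  induction p as [p IH|p IH|]; simpl length;
    [rewrite Pos2Nat.inj_xI|rewrite Pos2Nat.inj_xO|reflexivity];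
    pose proof (Pos2Nat.is_pos p); rewrite IH.
  - replace (S (2 * Pos.to_nat p)) with (2 * Pos.to_nat p + 1) by lia.
    rewrite Nat.log2_succ_double by lia. lia.
  - rewrite Nat.log2_double by lia. lia.
Qed.

Definition nat_code (k : nat) : list bool := pos_code (Pos.of_succ_nat k).

Definition nat_decode (bs : list bool) : nat * list bool :=
  let (p, r) := pos_decode bs in (Nat.pred (Pos.to_nat p), r).

Lemma nat_decode_code k r : nat_decode (nat_code k ++ r) = (k, r).
Proof. unfold nat_decode, nat_code. now rewrite pos_decode_code, SuccNat2Pos.pred_id. Qed.

Lemma nat_code_length k : length (nat_code k) = 2 * Nat.log2 (S k) + 1.
Proof. unfold nat_code. now rewrite pos_code_length, SuccNat2Pos.id_succ. Qed.

Definition encode (l : list nat) : list bool := flat_map nat_code l.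

Fixpoint decode_fuel (fuel : nat) (bs : list bool) : list nat :=
  match fuel, bs with
  | S f, _ :: _ => let (k, r) := nat_decode bs in k :: decode_fuel f r
  | _, _ => []
  end.

Definition decode (bs : list bool) : list nat := decode_fuel (length bs) bs.

Lemma decode_fuel_encode l : forall fuel, length (encode l) <= fuel ->
  decode_fuel fuel (encode l) = l.
Proof.
  induction l as [|k l IH]; intros fuel Hfuel; [now destruct fuel|].
  unfold encode in *. simpl flat_map in *. rewrite length_app, nat_code_length in Hfuel.
  destruct fuel as [|f]; [lia|].
  destruct (nat_code k ++ flat_map nat_code l) as [|b bs] eqn:Hbs.
  { apply (f_equal (@length _)) in Hbs.
    rewrite length_app, nat_code_length in Hbs. simpl in Hbs. lia. }
  simpl. rewrite <- Hbs, nat_decode_code, IH by lia. reflexivity.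
Qed.

Lemma decode_encode l : decode (encode l) = l.
Proof. apply decode_fuel_encode. reflexivity. Qed.

Lemma encode_length M l : Forall (fun k => k < M) l ->
  length (encode l) <= length l * (2 * Nat.log2 M + 1).
Proof.
  induction 1 as [|k l Hk _ IH]; [reflexivity|].
  unfold encode in *. simpl. rewrite length_app, nat_code_length.
  pose proof (Nat.log2_le_mono (S k) M Hk). lia.
Qed.

Fixpoint rules_of_list (l : list nat) : list rule :=
  match l with
  | a :: b :: c :: d :: e :: f :: rest => Rule a b c d e f :: rules_of_list rest
  | _ => []
  end.

Fixpoint hops_of_list (l : list nat) : list hop :=
  match l with
  | a :: b :: c :: d :: rest => Hop a b c d :: hops_of_list rest
  | _ => []
  end.

Lemma rules_of_list_fields rs : rules_of_list (flat_map rule_fields rs) = rs.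
Proof. induction rs as [|[] rs IH]; simpl; now f_equal. Qed.

Lemma hops_of_list_fields T : hops_of_list (flat_map hop_fields T) = T.
Proof. induction T as [|[] T IH]; simpl; now f_equal. Qed.

Definition advice_list (n phi : nat) (rs : list rule) (T : list hop) : list nat :=
  n :: phi :: length rs :: flat_map rule_fields rs ++ flat_map hop_fields T.

Definition parse (l : list nat) : nat * nat * list rule * list hop :=
  match l with
  | n :: phi :: k :: rest =>
      (n, phi, rules_of_list (firstn (6 * k) rest), hops_of_list (skipn (6 * k) rest))
  | _ => (0, 0, [], [])
  end.

Lemma parse_advice_list n phi rs T : parse (advice_list n phi rs T) = (n, phi, rs, T).
Proof.
  unfold parse, advice_list.
  replace (6 * length rs) with (length (flat_map rule_fields rs))
    by (rewrite (flat_map_constant_length (c := 6)); [lia|reflexivity]).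
  rewrite firstn_app, skipn_app, firstn_all, skipn_all, Nat.sub_diag, app_nil_r.
  simpl. now rewrite rules_of_list_fields, hops_of_list_fields.
Qed.

(* The height of the view received in round [r] is [r]. *)
Definition elect : algorithm := fun adv V =>
  let '(n, phi, rs, T) := parse (decode adv) in
  if height V =? phi then Some (route T n (vname rs phi V)) else None.

Lemma elects_with_advice G phi rs T : wf_graph G ->
  (forall v, v < pg_n G -> simple_path_to G v (route T (pg_n G) (gname G rs phi v)) 0) ->
  elects_in elect (encode (advice_list (pg_n G) phi rs T)) G phi.
Proof.
  intros W Hpath. exists 0. split; [destruct W; lia|]. intros v Hv.
  assert (Hout : forall r, elect (encode (advice_list (pg_n G) phi rs T)) (bview G r v) =
            if r =? phi then Some (route T (pg_n G) (vname rs phi (bview G r v))) else None).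
  { intros r. unfold elect. now rewrite decode_encode, parse_advice_list, height_bview. }
  exists phi, (route T (pg_n G) (gname G rs phi v)). split; [|split; [|split]].
  - reflexivity.
  - intros r Hr. rewrite Hout.
    now replace (r =? phi) with false by (symmetry; apply Nat.eqb_neq; lia).
  - now rewrite Hout, Nat.eqb_refl, vname_bview.
  - now apply Hpath.
Qed.

Lemma advice_length_le n phi rs T : 2 <= n -> length rs <= n -> length T < n ->
  Forall (fun k => k < 2 * n) (advice_list n phi rs T) ->
  length (encode (advice_list n phi rs T)) <= 50 * n * Nat.log2 n.
Proof.
  intros Hn Hrs HT Hall. eapply Nat.le_trans; [apply (encode_length _ _ Hall)|].
  assert (Hlen : length (advice_list n phi rs T) <= 10 * n).
  { unfold advice_list. simpl. rewrite length_app.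
    rewrite (flat_map_constant_length (c := 6)), (flat_map_constant_length (c := 4)) by reflexivity.
    lia. }
  assert (Hbits : 2 * Nat.log2 (2 * n) + 1 <= 5 * Nat.log2 n).
  { rewrite Nat.log2_double by lia.
    assert (1 <= Nat.log2 n) by (apply Nat.log2_le_pow2; simpl; lia). lia. }
  pose proof (Nat.mul_le_mono _ _ _ _ Hlen Hbits). lia.
Qed.

Lemma advice_exists G phi : wf_graph G -> election_index G phi ->
  exists adv, elects_in elect adv G phi /\ length adv <= 50 * pg_n G * Nat.log2 (pg_n G).
Proof.
  intros W Hphi. assert (Hn : 3 <= pg_n G) by (destruct W; auto).
  destruct (level_names_exist G W phi Hphi phi (le_n _)) as [rs [Hrules Hidx Hcount Hlt Hviews]].
  pose proof (nvalues_le (pg_n G) (gname G rs phi)).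
  assert (Hinj : forall u w, u < pg_n G -> w < pg_n G ->
                   gname G rs phi u = gname G rs phi w -> u = w).
  { intros u w Hu Hw Heq. destruct (Nat.eq_dec u w) as [|Huw]; [assumption|].
    exfalso. apply (proj1 Hphi u w Hu Hw Huw), Hviews; auto. }
  destruct (spanning_tree_exists G W) as [rank [par [pp Hpar]]].
  set (T := table G (gname G rs phi) par pp).
  exists (encode (advice_list (pg_n G) phi rs T)). split.
  - apply elects_with_advice; [exact W|]. intros v Hv.
    now apply (route_simple_path G W _ Hinj rank).
  - apply advice_length_le; [lia|lia|unfold T; rewrite table_length; lia|].
    repeat constructor; try lia. apply Forall_app. split.
    + apply Forall_flat_map. refine (Forall_impl _ _ Hrules).
      intros r [_ Hr]. revert Hr. apply rule_lt_mono. lia.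
    + apply (table_fields_lt G W _ rank); auto; [lia|]. intros v Hv. specialize (Hlt v Hv). lia.
Qed.

Lemma election_index_unique G phi phi' :
  election_index G phi -> election_index G phi' -> phi = phi'.
Proof.
  intros [Hd Hmin] [Hd' Hmin']. destruct (Nat.lt_total phi phi') as [Hlt|[Heq|Hlt]].
  - now destruct (Hmin' phi Hlt).
  - exact Heq.
  - now destruct (Hmin phi' Hlt).
Qed.

Definition good_advice (G : pgraph) (adv : list bool) : Prop :=
  forall phi, election_index G phi ->
    elects_in elect adv G phi /\ length adv <= 50 * pg_n G * Nat.log2 (pg_n G).

Definition Adv (G : pgraph) : list bool := epsilon (inhabits []) (good_advice G).

Lemma Adv_good G phi : wf_graph G -> election_index G phi -> good_advice G (Adv G).
Proof.
  intros W Hphi. unfold Adv. apply epsilon_spec.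
  destruct (advice_exists G phi W Hphi) as [adv Hadv]. exists adv.
  intros phi' Hphi'. now rewrite <- (election_index_unique G phi phi' Hphi Hphi').
Qed.

Lemma INR_log2_le n : 0 < n -> (INR (Nat.log2 n) <= log2 (INR n))%R.
Proof.
  intros Hn. unfold log2.
  assert (Hln2 : (0 < ln 2)%R) by (rewrite <- ln_1; apply ln_increasing; lra).
  apply Rmult_le_reg_r with (ln 2); [exact Hln2|].
  unfold Rdiv. rewrite Rmult_assoc, Rinv_l, Rmult_1_r by lra.
  rewrite <- ln_pow by lra.
  assert (Hpow : (2 ^ Nat.log2 n <= INR n)%R).
  { replace 2%R with (INR 2) by reflexivity. rewrite <- pow_INR.
    apply le_INR, Nat.log2_spec, Hn. }
  destruct (Rle_lt_or_eq_dec _ _ Hpow) as [Hlt|Heq]; [|rewrite Heq; lra].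
  left. apply ln_increasing; [apply pow_lt; lra|exact Hlt].
Qed.

Lemma INR_le_mul_log2 C n m : 0 < n -> m <= C * n * Nat.log2 n ->
  (INR m <= INR C * INR n * log2 (INR n))%R.
Proof.
  intros Hn Hm. apply le_INR in Hm. rewrite !mult_INR in Hm.
  eapply Rle_trans; [exact Hm|]. apply Rmult_le_compat_l.
  - apply Rmult_le_pos; apply pos_INR.
  - now apply INR_log2_le.
Qed.

Theorem theorem1 :
  exists (C : R) (A : algorithm) (Adv : pgraph -> list bool),
    (0 < C)%R /\
    forall (G : pgraph) (phi : nat),
      wf_graph G -> feasible G -> election_index G phi ->
      (INR (length (Adv G)) <= C * INR (pg_n G) * log2 (INR (pg_n G)))%R /\
      elects_in A (Adv G) G phi.
Proof.
  exists (INR 50), elect, Adv. split; [apply lt_0_INR; lia|].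
  intros G phi W _ Hphi.
  destruct (Adv_good G phi W Hphi phi Hphi) as [Helect Hlen].
  split; [|exact Helect].
  apply INR_le_mul_log2; [destruct W; lia|exact Hlen].
Qed.
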